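(* For every $\varepsilon>0$ and every $M>0$ there exists a function $\phi:\mathbb{R}\to\mathbb{R}$ generated by a $\widetilde{\sigma}$-activated network with width $50$ and depth $6$ such that $|\phi(x)-\sigma(x)|<\varepsilon$ for all $x\in[-M,M]$.
   Context: Let $\sigma_1:\mathbb{R}\to\mathbb{R}$ be the continuous triangular-wave function of period $2$: $\sigma_1(x)=|x|$ for $x\in[-1,1]$, $\sigma_1(x+2)=\sigma_1(x)$. Let $\sigma(x)=\sigma_1(x)$ for $x\ge0$ and $\sigma(x)=x/(|x|+1)$ for $x<0$. Define $\widetilde{\sigma}(x)=\frac{x}{-x+1}$ for $x\le 0$ and $\widetilde{\sigma}(x)=\int_0^x\frac{c\,\sigma(t)+1}{(2t+1)^2}\,dt$ for $x>0$, where $c=\big(2\int_0^\infty\frac{\sigma(t)}{(2t+1)^2}dt\big)^{-1}$. For an activation $\eta$ (applied entrywise), a function generated by an $\eta$-activated network with one input, width $N$ and depth $L$ is a function of the form $\mathcal{L}_{\ell}\circ\eta\circ\mathcal{L}_{\ell-1}\circ\cdots\circ\eta\circ\mathcal{L}_0$ with $\ell\le L$ hidden layers, affine maps $\mathcal{L}_i$, $\mathcal{L}_0$ with domain $\mathbb{R}$, $\mathcal{L}_\ell$ with codomain $\mathbb{R}$, and at most $N$ neurons in each hidden layer. *)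

From Stdlib Require Import Reals List.
From Coquelicot Require Import Coquelicot.
Open Scope R_scope.

(* Int_part r is the floor of r (Stdlib: Int_part r = up r - 1, IZR (up r) in (r, r+1]). *)
(* triangular wave of period 2, equal to |x| on [-1,1] *)
Definition sigma1 (x : R) : R := Rabs (x - 2 * IZR (Int_part ((x + 1) / 2))).

Definition sigma_act (x : R) : R :=
  if Rle_dec 0 x then sigma1 x else x / (Rabs x + 1).

Definition c_const : R :=
  / (2 * RInt_gen (fun t => sigma_act t / (2 * t + 1) ^ 2)
                  (at_point 0) (Rbar_locally p_infty)).

Definition sigma_tilde (x : R) : R :=
  if Rle_dec x 0 then x / (- x + 1)
  else RInt (fun t => (c_const * sigma_act t + 1) / (2 * t + 1) ^ 2) 0 x.

Fixpoint rsum (m : nat) (f : nat -> R) : R :=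
  match m with O => 0 | S k => rsum k f + f k end.

(* affine map R^m -> R^n, vectors as nat -> R (coordinates >= dimension unused) *)
Definition affine (m : nat) (W : nat -> nat -> R) (b : nat -> R) (v : nat -> R)
  : nat -> R := fun j => rsum m (fun k => W j k * v k) + b j.

(* a hidden layer: (output width n, weights W, bias b); the affine map is
   followed by the entrywise activation *)
Definition layer := (nat * (nat -> nat -> R) * (nat -> R))%type.

Fixpoint eval_hidden (act : R -> R) (d : nat) (ls : list layer) (v : nat -> R)
  : nat * (nat -> R) :=
  match ls with
  | nil => (d, v)
  | (n, W, b) :: ls' => eval_hidden act n ls' (fun j => act (affine d W b v j))
  end.

Definition net_eval (act : R -> R) (ls : list layer) (wo : nat -> R) (bo : R)
  (x : R) : R :=
  let '(d, v) := eval_hidden act 1 ls (fun _ => x) in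
  rsum d (fun k => wo k * v k) + bo.

Definition nn_generated (act : R -> R) (N L : nat) (phi : R -> R) : Prop :=
  exists (ls : list layer) (wo : nat -> R) (bo : R),
    (length ls <= L)%nat /\
    List.Forall (fun l : layer => let (p, _) := l in let (n, _) := p in (n <= N)%nat) ls /\
    forall x, phi x = net_eval act ls wo bo x.

From Stdlib Require Import Reals Lra Lia Classical List.
From Coquelicot Require Import Coquelicot.
Open Scope R_scope.

(* For t > 0 the derivative of sigma_tilde is (c sigma(t) + 1) / (2t + 1)^2, a
   Lipschitz function on [0, oo).  Hence a difference quotient of sigma_tilde
   taken far out, at an even integer A, is close to
   (c sigma1(u) + 1) / (2A + 1 + 2u)^2, and rescaling by (2A + 1)^2 recovers the
   triangular wave sigma1 uniformly on compact sets from two neurons.  Two such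
   neurons give |x| on [-M, M], and one neuron on the branch t / (1 - t) gives x,
   since 4 (sigma_tilde(e x - 1) + 1/2) / e = 2x / (2 - e x).  A second layer then
   evaluates sigma1 at ~ max(x, 0) with two neurons and sigma_tilde at
   ~ min(x, 0) - d <= 0 with a third; their sum approximates sigma on both sides
   of 0, so width 3 and depth 2 already suffice. *)

Lemma sigma1_nearest_even (x : R) :
  -1 <= x - 2 * IZR (Int_part ((x + 1) / 2)) < 1.
Proof. destruct (base_Int_part ((x + 1) / 2)); lra. Qed.

Lemma Rabs_le_shift_even (v : R) (m : Z) :
  Rabs v <= 1 -> Rabs v <= Rabs (v - 2 * IZR m).
Proof.
  intros Hv.
  destruct (Z.lt_trichotomy m 0) as [Hm | [-> | Hm]].
  - assert (IZR m <= -1) by (apply IZR_le; lia). split_Rabs; lra.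
  - split_Rabs; lra.
  - assert (1 <= IZR m) by (apply IZR_le; lia). split_Rabs; lra.
Qed.

Lemma sigma1_le_dist (x : R) (k : Z) : sigma1 x <= Rabs (x - 2 * IZR k).
Proof.
  unfold sigma1. set (k0 := Int_part ((x + 1) / 2)).
  pose proof (sigma1_nearest_even x) as Hx. fold k0 in Hx.
  replace (x - 2 * IZR k) with (x - 2 * IZR k0 - 2 * IZR (k - k0))
    by (rewrite minus_IZR; ring).
  apply Rabs_le_shift_even. split_Rabs; lra.
Qed.

Lemma sigma1_bounds (x : R) : 0 <= sigma1 x <= 1.
Proof. unfold sigma1. pose proof (sigma1_nearest_even x). split_Rabs; lra. Qed.

Lemma sigma1_Rabs (x : R) : Rabs x <= 1 -> sigma1 x = Rabs x.
Proof.
  intros Hx. apply Rle_antisym.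
  - pose proof (sigma1_le_dist x 0). rewrite Rmult_0_r, Rminus_0_r in H. exact H.
  - apply Rabs_le_shift_even, Hx.
Qed.

Lemma sigma1_periodic (x : R) (n : Z) : sigma1 (x + 2 * IZR n) = sigma1 x.
Proof.
  apply Rle_antisym.
  - pose proof (sigma1_le_dist (x + 2 * IZR n) (Int_part ((x + 1) / 2) + n)) as H.
    rewrite plus_IZR in H. unfold sigma1 at 2.
    replace (x + 2 * IZR n - 2 * (IZR (Int_part ((x + 1) / 2)) + IZR n))
      with (x - 2 * IZR (Int_part ((x + 1) / 2))) in H by ring.
    exact H.
  - set (k := Int_part ((x + 2 * IZR n + 1) / 2)).
    pose proof (sigma1_le_dist x (k - n)) as H. rewrite minus_IZR in H.
    unfold sigma1 at 2. fold k.
    replace (x - 2 * (IZR k - IZR n)) with (x + 2 * IZR n - 2 * IZR k) in H by ring.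
    exact H.
Qed.

Lemma sigma1_Lipschitz (x y : R) : Rabs (sigma1 x - sigma1 y) <= Rabs (x - y).
Proof.
  assert (Hle : forall x y, sigma1 x <= Rabs (x - y) + sigma1 y).
  { clear. intros x y. unfold sigma1 at 2.
    set (k := Int_part ((y + 1) / 2)).
    pose proof (sigma1_le_dist x k).
    pose proof (Rabs_triang (x - y) (y - 2 * IZR k)).
    replace (x - y + (y - 2 * IZR k)) with (x - 2 * IZR k) in * by ring. lra. }
  pose proof (Hle x y). pose proof (Hle y x) as H'.
  rewrite (Rabs_minus_sym y x) in H'. clear Hle.
  split_Rabs; lra.
Qed.

Lemma sigma1_continuous (x : R) : continuous sigma1 x.
Proof.
  apply continuity_pt_filterlim. intros eps Heps. exists eps. split; [exact Heps |].
  intros y [_ Hy]. simpl in *. unfold R_dist in *. pose proof (sigma1_Lipschitz y x). lra.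
Qed.

Lemma sigma_act_nonneg (x : R) : 0 <= x -> sigma_act x = sigma1 x.
Proof. intros Hx. unfold sigma_act. destruct (Rle_dec 0 x); [reflexivity | lra]. Qed.

Lemma sigma_tilde_nonpos (x : R) : x <= 0 -> sigma_tilde x = x / (1 - x).
Proof.
  intros Hx. unfold sigma_tilde. destruct (Rle_dec x 0); [| lra].
  f_equal; ring.
Qed.

Lemma sigma_act_nonpos (x : R) : x <= 0 -> sigma_act x = sigma_tilde x.
Proof.
  intros Hx. rewrite sigma_tilde_nonpos by exact Hx. unfold sigma_act.
  destruct (Rle_dec 0 x).
  - replace x with 0 by lra. rewrite sigma1_Rabs; rewrite Rabs_R0; [field | lra].
  - rewrite Rabs_left by lra. f_equal; ring.
Qed.

Lemma continuous_sigma1_weighted (a b z : R) : 2 * z + 1 <> 0 ->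
  continuous (fun t => (a * sigma1 t + b) / (2 * t + 1) ^ 2) z.
Proof.
  intros Hz. apply (continuous_mult (K := R_AbsRing) (fun t => a * sigma1 t + b)).
  - apply (continuous_comp (W := R_UniformSpace) sigma1 (fun s => a * s + b)).
    + apply sigma1_continuous.
    + apply (ex_derive_continuous (K := R_AbsRing) (V := R_NormedModule)).
      auto_derive. exact I.
  - apply (ex_derive_continuous (K := R_AbsRing) (V := R_NormedModule)).
    auto_derive. rewrite Rmult_1_r. now apply Rmult_integral_contrapositive_currified.
Qed.

Lemma ex_RInt_sigma_act_weighted (a b u v : R) : 0 <= u -> 0 <= v ->
  ex_RInt (fun t => (a * sigma_act t + b) / (2 * t + 1) ^ 2) u v.
Proof.
  intros Hu Hv.
  assert (Hmin : 0 <= Rmin u v) by (apply Rmin_glb; assumption).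
  apply (ex_RInt_ext (fun t => (a * sigma1 t + b) / (2 * t + 1) ^ 2)).
  - intros t [Ht _]. rewrite sigma_act_nonneg by lra. reflexivity.
  - apply (ex_RInt_continuous (V := R_CompleteNormedModule)).
    intros z [Hz _]. apply continuous_sigma1_weighted. lra.
Qed.

Lemma RInt_nonneg_monotone (f : R -> R) (a b b' : R) :
  (forall u v, a <= u -> a <= v -> ex_RInt f u v) ->
  (forall t, a <= t -> 0 <= f t) ->
  a <= b <= b' -> RInt f a b <= RInt f a b'.
Proof.
  intros Hint Hpos Hb.
  rewrite <- (RInt_Chasles f a b b') by (apply Hint; lra).
  assert (0 <= RInt f b b').
  { apply RInt_ge_0; [lra | apply Hint; lra | intros t Ht; apply Hpos; lra]. }
  simpl. unfold plus. simpl. lra.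
Qed.

Lemma is_RInt_gen_nonneg_bounded (f : R -> R) (a B : R) :
  (forall u v, a <= u -> a <= v -> ex_RInt f u v) ->
  (forall t, a <= t -> 0 <= f t) ->
  (forall b, a <= b -> RInt f a b <= B) ->
  exists I, is_RInt_gen f (at_point a) (Rbar_locally p_infty) I /\
            forall b, a <= b -> RInt f a b <= I.
Proof.
  intros Hint Hpos Hbnd.
  set (E := fun y => exists b, a <= b /\ y = RInt f a b).
  destruct (completeness E) as [I [Hub Hlub]].
  - exists B. intros y [b [Hb ->]]. apply Hbnd, Hb.
  - exists (RInt f a a). exists a. split; [lra | reflexivity].
  - assert (Hle : forall b, a <= b -> RInt f a b <= I)
      by (intros b Hb; apply Hub; exists b; split; [exact Hb | reflexivity]).
    exists I. split; [| exact Hle].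
    intros P [eps HP].
    assert (Hb0 : exists b0, a <= b0 /\ I - eps < RInt f a b0).
    { apply NNPP. intros Hn.
      assert (Hup : is_upper_bound E (I - eps)).
      { intros y [b [Hb ->]]. apply Rnot_lt_le. intros Hlt. apply Hn. exists b. split; assumption. }
      apply Hlub in Hup. destruct eps as [eps Heps]. simpl in Hup. lra. }
    destruct Hb0 as [b0 [Hb0 Hlt]].
    apply Filter_prod with (Q := fun u => u = a) (R := fun v => b0 < v).
    + reflexivity.
    + exists b0. tauto.
    + intros u v -> Hv. exists (RInt f a v). split.
      * apply (RInt_correct (V := R_CompleteNormedModule)). apply Hint; lra.
      * apply HP. pose proof (RInt_nonneg_monotone f a b0 v Hint Hpos ltac:(lra)).
        pose proof (Hle v ltac:(lra)).
        unfold ball; simpl. unfold AbsRing_ball, abs, minus, plus, opp; simpl.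
        rewrite Rabs_left1 by lra. lra.
Qed.

Definition sigma_weight (t : R) : R := sigma_act t / (2 * t + 1) ^ 2.

Lemma ex_RInt_sigma_weight (u v : R) : 0 <= u -> 0 <= v -> ex_RInt sigma_weight u v.
Proof.
  intros Hu Hv. apply (ex_RInt_ext (fun t => (1 * sigma_act t + 0) / (2 * t + 1) ^ 2)).
  - intros t _. unfold sigma_weight. f_equal. ring.
  - apply ex_RInt_sigma_act_weighted; assumption.
Qed.

Lemma sigma_weight_nonneg (t : R) : 0 <= t -> 0 <= sigma_weight t.
Proof.
  intros Ht. unfold sigma_weight. rewrite sigma_act_nonneg by exact Ht.
  pose proof (sigma1_bounds t). apply Rdiv_le_0_compat; [lra | apply pow_lt; lra].
Qed.

Lemma is_RInt_inv_sqr (b : R) : 0 <= b ->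
  is_RInt (fun t => / (2 * t + 1) ^ 2) 0 b (/ 2 - / (2 * (2 * b + 1))).
Proof.
  intros Hb.
  replace (/ 2 - / (2 * (2 * b + 1)))
    with (minus (- / (2 * (2 * b + 1))) (- / (2 * (2 * 0 + 1))))
    by (unfold minus, plus, opp; simpl; field; lra).
  apply (is_RInt_derive (V := R_CompleteNormedModule) (fun t => - / (2 * (2 * t + 1)))).
  - intros t [Ht _]. rewrite Rmin_left in Ht by exact Hb.
    auto_derive; [lra | field; lra].
  - intros t [Ht _]. rewrite Rmin_left in Ht by exact Hb.
    apply (ex_derive_continuous (K := R_AbsRing) (V := R_NormedModule)).
    auto_derive. rewrite Rmult_1_r. apply Rmult_integral_contrapositive_currified; lra.
Qed.

Lemma RInt_sigma_weight_le_half (b : R) : 0 <= b -> RInt sigma_weight 0 b <= / 2.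
Proof.
  intros Hb.
  apply Rle_trans with (RInt (fun t => / (2 * t + 1) ^ 2) 0 b).
  - apply RInt_le;
      [exact Hb | apply ex_RInt_sigma_weight; lra | eexists; apply is_RInt_inv_sqr, Hb |].
    intros t Ht. unfold sigma_weight. rewrite sigma_act_nonneg by lra.
    pose proof (sigma1_bounds t).
    assert (0 < / (2 * t + 1) ^ 2) by (apply Rinv_0_lt_compat, pow_lt; lra).
    unfold Rdiv. nra.
  - rewrite (is_RInt_unique _ _ _ _ (is_RInt_inv_sqr b Hb)).
    assert (0 < / (2 * (2 * b + 1))) by (apply Rinv_0_lt_compat; lra). lra.
Qed.

Lemma RInt_sigma_weight_pos : 0 < RInt sigma_weight 0 1.
Proof.
  rewrite (RInt_ext _ (fun t => (1 * sigma1 t + 0) / (2 * t + 1) ^ 2)).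
  - apply RInt_gt_0; [lra | |].
    + intros t Ht. rewrite sigma1_Rabs, Rabs_right by (try rewrite Rabs_right; lra).
      apply Rdiv_lt_0_compat; [lra | apply pow_lt; lra].
    + intros t Ht. apply continuous_sigma1_weighted. lra.
  - intros t Ht. rewrite Rmin_left, Rmax_right in Ht by lra.
    unfold sigma_weight. rewrite sigma_act_nonneg by lra. f_equal. ring.
Qed.

Lemma c_const_pos : 0 < c_const.
Proof.
  destruct (is_RInt_gen_nonneg_bounded sigma_weight 0 (/ 2)) as [I [HI Hle]].
  - apply ex_RInt_sigma_weight.
  - apply sigma_weight_nonneg.
  - apply RInt_sigma_weight_le_half.
  - unfold c_const. fold sigma_weight. rewrite (is_RInt_gen_unique _ _ HI).
    pose proof (Hle 1 ltac:(lra)). pose proof RInt_sigma_weight_pos.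
    apply Rinv_0_lt_compat. lra.
Qed.

Definition dsigma_tilde (t : R) : R := (c_const * sigma_act t + 1) / (2 * t + 1) ^ 2.

Lemma sigma_tilde_nonneg (y : R) : 0 <= y -> sigma_tilde y = RInt dsigma_tilde 0 y.
Proof.
  intros Hy. unfold sigma_tilde. destruct (Rle_dec y 0); [| reflexivity].
  replace y with 0 by lra. rewrite RInt_point. unfold zero; simpl. field.
Qed.

Lemma inv_sqr_Lipschitz (P Q : R) : 1 <= P -> 1 <= Q ->
  Rabs (/ P ^ 2 - / Q ^ 2) <= 2 * Rabs (P - Q).
Proof.
  intros HP HQ.
  replace (/ P ^ 2 - / Q ^ 2) with ((P - Q) * - ((P + Q) / (P ^ 2 * Q ^ 2)))
    by (field; lra).
  rewrite Rabs_mult, Rmult_comm. apply Rmult_le_compat_r; [apply Rabs_pos |].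
  rewrite Rabs_Ropp, Rabs_right
    by (apply Rle_ge, Rdiv_le_0_compat; [lra | apply Rmult_lt_0_compat; apply pow_lt; lra]).
  apply Rle_div_l; [apply Rmult_lt_0_compat; apply pow_lt; lra |].
  assert (1 <= P * Q) by nra. assert (P * Q <= P ^ 2 * Q ^ 2) by nra. nra.
Qed.

Lemma dsigma_tilde_Lipschitz (t y : R) : 0 <= t -> 0 <= y ->
  Rabs (dsigma_tilde t - dsigma_tilde y) <= (5 * c_const + 4) * Rabs (t - y).
Proof.
  intros Ht Hy. pose proof c_const_pos as Hc. set (c := c_const) in *.
  unfold dsigma_tilde. fold c. rewrite !sigma_act_nonneg by assumption.
  pose proof (sigma1_bounds y). pose proof (sigma1_Lipschitz t y).
  pose proof (inv_sqr_Lipschitz (2 * t + 1) (2 * y + 1) ltac:(lra) ltac:(lra)) as Hinv.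
  replace (2 * t + 1 - (2 * y + 1)) with (2 * (t - y)) in Hinv by ring.
  rewrite Rabs_mult, (Rabs_right 2) in Hinv by lra.
  assert (Ht2 : 0 < / (2 * t + 1) ^ 2 <= 1).
  { split; [apply Rinv_0_lt_compat, pow_lt; lra |].
    rewrite <- Rinv_1. apply Rinv_le_contravar; [lra | nra]. }
  unfold Rdiv.
  replace ((c * sigma1 t + 1) * / (2 * t + 1) ^ 2 - (c * sigma1 y + 1) * / (2 * y + 1) ^ 2)
    with (c * (sigma1 t - sigma1 y) * / (2 * t + 1) ^ 2
          + (c * sigma1 y + 1) * (/ (2 * t + 1) ^ 2 - / (2 * y + 1) ^ 2)) by ring.
  eapply Rle_trans; [apply Rabs_triang |].
  rewrite !Rabs_mult, (Rabs_right c), (Rabs_right (/ (2 * t + 1) ^ 2)),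
    (Rabs_right (c * sigma1 y + 1)) by nra.
  pose proof (Rabs_pos (sigma1 t - sigma1 y)).
  pose proof (Rabs_pos (/ (2 * t + 1) ^ 2 - / (2 * y + 1) ^ 2)).
  assert (c * Rabs (sigma1 t - sigma1 y) * / (2 * t + 1) ^ 2 <= c * Rabs (t - y)).
  { apply Rle_trans with (c * Rabs (sigma1 t - sigma1 y) * 1);
      [apply Rmult_le_compat_l |]; nra. }
  assert ((c * sigma1 y + 1) * Rabs (/ (2 * t + 1) ^ 2 - / (2 * y + 1) ^ 2)
          <= (c + 1) * (4 * Rabs (t - y))) by (apply Rmult_le_compat; nra).
  nra.
Qed.

Lemma left_rectangle_error_le (g : R -> R) (L y h : R) : 0 <= h ->
  ex_RInt g y (y + h) ->
  (forall t, y <= t <= y + h -> Rabs (g t - g y) <= L * h) ->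
  Rabs (RInt g y (y + h) - h * g y) <= L * h ^ 2.
Proof.
  intros Hh Hg Hlip.
  replace (RInt g y (y + h) - h * g y) with (RInt (fun t => g t - g y) y (y + h)).
  - replace (L * h ^ 2) with ((y + h - y) * (L * h)) by ring.
    apply abs_RInt_le_const; [lra | | exact Hlip].
    apply (ex_RInt_minus (V := R_NormedModule)); [exact Hg | apply ex_RInt_const].
  - rewrite (RInt_minus (V := R_CompleteNormedModule)) by (try apply ex_RInt_const; exact Hg).
    rewrite RInt_const. unfold minus, plus, opp, scal; simpl. unfold mult; simpl. ring.
Qed.

Lemma sigma_tilde_difference_quotient (y h : R) : 0 <= y -> 0 < h ->
  Rabs ((sigma_tilde (y + h) - sigma_tilde y) / h - dsigma_tilde y)
  <= (5 * c_const + 4) * h.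
Proof.
  intros Hy Hh.
  assert (Hint : forall u v, 0 <= u -> 0 <= v -> ex_RInt dsigma_tilde u v)
    by (intros; apply ex_RInt_sigma_act_weighted; assumption).
  rewrite !sigma_tilde_nonneg by lra.
  rewrite <- (RInt_Chasles dsigma_tilde 0 y (y + h)) by (apply Hint; lra).
  replace ((plus (RInt dsigma_tilde 0 y) (RInt dsigma_tilde y (y + h))
            - RInt dsigma_tilde 0 y) / h - dsigma_tilde y)
    with ((RInt dsigma_tilde y (y + h) - h * dsigma_tilde y) * / h)
    by (unfold plus; simpl; field; lra).
  rewrite Rabs_mult, (Rabs_right (/ h)) by (apply Rle_ge, Rlt_le, Rinv_0_lt_compat, Hh).
  apply Rle_div_l; [exact Hh |].
  replace ((5 * c_const + 4) * h * h) with ((5 * c_const + 4) * h ^ 2) by ring.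
  apply left_rectangle_error_le; [lra | apply Hint; lra |].
  intros t Ht. eapply Rle_trans; [apply dsigma_tilde_Lipschitz; lra |].
  pose proof c_const_pos. apply Rmult_le_compat_l; [lra |].
  rewrite Rabs_right; lra.
Qed.

Lemma dsigma_tilde_shift_even (n : Z) (u : R) : 0 <= u + 2 * IZR n ->
  dsigma_tilde (u + 2 * IZR n)
  = (c_const * sigma1 u + 1) / (2 * (2 * IZR n) + 1 + 2 * u) ^ 2.
Proof.
  intros Hy. unfold dsigma_tilde. rewrite sigma_act_nonneg, sigma1_periodic by exact Hy.
  f_equal. f_equal. ring.
Qed.

Lemma sqr_ratio_bound (a B u : R) : 0 < B -> 8 * B <= a -> Rabs u <= B ->
  Rabs (a ^ 2 / (a + 2 * u) ^ 2 - 1) <= 8 * B / a.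
Proof.
  intros HB Ha Hu.
  assert (Hu' : - B <= u <= B) by (split_Rabs; lra).
  assert (HP : 3 * a / 4 <= a + 2 * u) by lra.
  replace (a ^ 2 / (a + 2 * u) ^ 2 - 1) with (- (2 * u) * (2 * a + 2 * u) / (a + 2 * u) ^ 2)
    by (field; lra).
  unfold Rdiv. rewrite !Rabs_mult, Rabs_Ropp, (Rabs_right (2 * a + 2 * u)), (Rabs_right (/ _))
    by (try apply Rle_ge, Rlt_le, Rinv_0_lt_compat, pow_lt; lra).
  apply Rmult_le_reg_r with ((a + 2 * u) ^ 2 * a);
    [apply Rmult_lt_0_compat; [apply pow_lt |]; lra |].
  replace (Rabs (2 * u) * (2 * a + 2 * u) * / (a + 2 * u) ^ 2 * ((a + 2 * u) ^ 2 * a))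
    with (Rabs (2 * u) * (2 * a + 2 * u) * a) by (field; lra).
  replace (8 * B * / a * ((a + 2 * u) ^ 2 * a)) with (8 * B * (a + 2 * u) ^ 2) by (field; lra).
  assert (Rabs (2 * u) <= 2 * B) by (split_Rabs; lra).
  assert ((2 * a + 2 * u) * a <= 4 * (a + 2 * u) ^ 2).
  { assert (0 <= a <= 4 / 3 * (a + 2 * u)) by lra. simpl. nra. }
  rewrite Rmult_assoc.
  replace (8 * B * (a + 2 * u) ^ 2) with (2 * B * (4 * (a + 2 * u) ^ 2)) by ring.
  apply Rmult_le_compat; [apply Rabs_pos | nra | assumption | assumption].
Qed.

Definition neuron_pair (act : R -> R) (alpha b0 b1 beta y : R) : R :=
  alpha * (act (y + b0) - act (y + b1)) + beta.

Lemma neuron_pair_sigma1_error (n : Z) (A h u : R) : A = 2 * IZR n -> 0 < h -> 0 <= u + A ->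
  Rabs (neuron_pair sigma_tilde ((2 * A + 1) ^ 2 / (h * c_const)) (A + h) A (- / c_const) u
        - sigma1 u)
  <= ((2 * A + 1) ^ 2 * ((5 * c_const + 4) * h)
      + (c_const + 1) * Rabs ((2 * A + 1) ^ 2 / (2 * A + 1 + 2 * u) ^ 2 - 1)) / c_const.
Proof.
  intros HA Hh Hy. pose proof c_const_pos as Hc.
  pose proof (sigma_tilde_difference_quotient (u + A) h Hy Hh) as HE.
  rewrite Rplus_assoc in HE.
  set (E := (sigma_tilde (u + (A + h)) - sigma_tilde (u + A)) / h - dsigma_tilde (u + A)) in HE.
  pose proof (sigma1_bounds u) as Hs.
  assert (Hshift : dsigma_tilde (u + A) = (c_const * sigma1 u + 1) / (2 * A + 1 + 2 * u) ^ 2)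
    by (subst A; apply dsigma_tilde_shift_even, Hy).
  assert (HP : 0 < 2 * A + 1 + 2 * u) by lra.
  replace (neuron_pair sigma_tilde ((2 * A + 1) ^ 2 / (h * c_const)) (A + h) A (- / c_const) u
           - sigma1 u)
    with (((2 * A + 1) ^ 2 * E
           + (c_const * sigma1 u + 1) * ((2 * A + 1) ^ 2 / (2 * A + 1 + 2 * u) ^ 2 - 1))
          / c_const)
    by (unfold neuron_pair, E; rewrite Hshift; field; lra).
  unfold Rdiv at 1 3. rewrite Rabs_mult, (Rabs_right (/ c_const))
    by (apply Rle_ge, Rlt_le, Rinv_0_lt_compat, Hc).
  apply Rmult_le_compat_r; [apply Rlt_le, Rinv_0_lt_compat, Hc |].
  eapply Rle_trans; [apply Rabs_triang |].
  rewrite !Rabs_mult, (Rabs_right ((2 * A + 1) ^ 2)), (Rabs_right (c_const * sigma1 u + 1))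
    by (try apply Rle_ge, pow2_ge_0; nra).
  apply Rplus_le_compat.
  - apply Rmult_le_compat_l; [apply pow2_ge_0 | exact HE].
  - apply Rmult_le_compat_r; [apply Rabs_pos | nra].
Qed.

Lemma sigma1_neuron_pair_approx (B d : R) : 0 < B -> 0 < d ->
  exists alpha b0 b1 beta, forall u, Rabs u <= B ->
    Rabs (neuron_pair sigma_tilde alpha b0 b1 beta u - sigma1 u) <= d.
Proof.
  intros HB Hd. pose proof c_const_pos as Hc. set (c := c_const) in *.
  set (L := 5 * c + 4). assert (HL : 0 < L) by (unfold L; lra).
  (* [K] makes the ratio error [(c + 1) 8 B / a] at most [d c / 2], and [h] makes
     the quadrature error [a^2 L h] equal to [d c / 2]. *)
  set (K := Rmax (8 * B) (16 * B * (c + 1) / (d * c)) + B).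
  pose proof (Rmax_l (8 * B) (16 * B * (c + 1) / (d * c))).
  pose proof (Rmax_r (8 * B) (16 * B * (c + 1) / (d * c))).
  assert (HKB : 9 * B <= K) by (unfold K; lra).
  destruct (archimed K) as [HK _].
  set (A := 2 * IZR (up K)). set (a := 2 * A + 1).
  assert (Ha : K <= a) by (unfold a, A; lra).
  assert (Ha0 : 0 < a) by lra.
  set (h := d * c / (2 * a ^ 2 * L)).
  assert (Hh : 0 < h).
  { apply Rdiv_lt_0_compat; [nra |].
    apply Rmult_lt_0_compat; [apply Rmult_lt_0_compat; [lra | apply pow_lt, Ha0] | exact HL]. }
  exists (a ^ 2 / (h * c)), (A + h), A, (- / c). intros u Hu.
  assert (Hu' : - B <= u <= B) by (split_Rabs; lra).
  eapply Rle_trans.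
  { apply (neuron_pair_sigma1_error (up K)); [reflexivity | exact Hh |]. unfold A. lra. }
  fold c a L. apply Rle_div_l; [exact Hc |].
  assert (Hquad : a ^ 2 * (L * h) = d * c / 2) by (unfold h; field; lra).
  pose proof (sqr_ratio_bound a B u HB ltac:(lra) Hu) as Hr.
  assert (Hratio : (c + 1) * (8 * B / a) <= d * c / 2).
  { apply Rmult_le_reg_r with (2 * a / (d * c)); [apply Rdiv_lt_0_compat; nra |].
    replace ((c + 1) * (8 * B / a) * (2 * a / (d * c))) with (16 * B * (c + 1) / (d * c))
      by (field; repeat split; lra).
    replace (d * c / 2 * (2 * a / (d * c))) with a by (field; split; lra).
    unfold K in Ha. lra. }
  assert ((c + 1) * Rabs (a ^ 2 / (a + 2 * u) ^ 2 - 1) <= (c + 1) * (8 * B / a))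
    by (apply Rmult_le_compat_l; lra).
  lra.
Qed.

Definition vec3 {T : Type} (a0 a1 a2 : T) (k : nat) : T :=
  match k with 0%nat => a0 | 1%nat => a1 | _ => a2 end.

Lemma nn_generated_recombination (act : R -> R) (N L : nat)
    (w a0 a1 alpha0 beta0 w' a alpha1 beta1 alpha b0 b1 beta d : R) :
  (3 <= N)%nat -> (2 <= L)%nat ->
  nn_generated act N L (fun x =>
    let aa := neuron_pair act alpha0 a0 a1 beta0 (w * x) in
    let ii := alpha1 * act (w' * x + a) + beta1 in
    neuron_pair act alpha b0 b1 beta ((ii + aa) / 2) + act ((ii - aa) / 2 - d)).
Proof.
  intros HN HL.
  (* [row s] and [shift s] are the weights and bias of [(ii + s * aa) / 2] as an
     affine function of the three first-layer outputs. *)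
  set (row := fun s => vec3 (s * alpha0 / 2) (- (s * alpha0 / 2)) (alpha1 / 2)).
  set (shift := fun s => (beta1 + s * beta0) / 2).
  exists ((3%nat, (fun j _ => vec3 w w w' j), vec3 a0 a1 a) ::
          (3%nat, vec3 (row 1) (row 1) (row (-1)),
                  vec3 (shift 1 + b0) (shift 1 + b1) (shift (-1) - d)) :: nil),
         (vec3 alpha (- alpha) 1), beta.
  split; [simpl; lia |]. split; [repeat constructor; simpl; lia |].
  intros x. unfold net_eval, neuron_pair, row, shift. simpl. unfold affine, vec3. simpl.
  rewrite !Rplus_0_l.
  match goal with
  | |- ?l * (act ?F0 - act ?F1) + ?b + act ?F2
       = ?l * act ?E0 + - ?l * act ?E1 + 1 * act ?E2 + ?b =>
      replace F0 with E0 by field; replace F1 with E1 by field;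
      replace F2 with E2 by field; ring
  end.
Qed.

Lemma Rabs_neuron_pair_approx (M d : R) : 0 < M -> 0 < d ->
  exists w alpha b0 b1 beta, forall x, Rabs x <= M ->
    Rabs (neuron_pair sigma_tilde alpha b0 b1 beta (w * x) - Rabs x) <= d.
Proof.
  intros HM Hd.
  destruct (sigma1_neuron_pair_approx 1 (d / M)) as [alpha [b0 [b1 [beta Happrox]]]];
    [lra | apply Rdiv_lt_0_compat; assumption |].
  exists (/ M), (M * alpha), b0, b1, (M * beta). intros x Hx.
  assert (Hu : Rabs (/ M * x) <= 1).
  { rewrite Rabs_mult, Rabs_right by (apply Rle_ge, Rlt_le, Rinv_0_lt_compat, HM).
    apply Rmult_le_reg_l with M; [exact HM |]. field_simplify; lra. }
  replace (neuron_pair sigma_tilde (M * alpha) b0 b1 (M * beta) (/ M * x) - Rabs x)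
    with (M * (neuron_pair sigma_tilde alpha b0 b1 beta (/ M * x) - sigma1 (/ M * x))).
  - rewrite Rabs_mult, Rabs_right by lra.
    apply Rle_trans with (M * (d / M)); [apply Rmult_le_compat_l; [lra | auto] |].
    right. field. lra.
  - unfold neuron_pair. rewrite sigma1_Rabs, Rabs_mult, (Rabs_right (/ M)) by
      (try apply Rle_ge, Rlt_le, Rinv_0_lt_compat, HM; exact Hu).
    field. lra.
Qed.

Lemma id_neuron_approx (M d : R) : 0 < M -> 0 < d ->
  exists w b alpha beta, forall x, Rabs x <= M ->
    Rabs (alpha * sigma_tilde (w * x + b) + beta - x) <= d.
Proof.
  intros HM Hd. set (e := d / (M * (M + d))).
  assert (He : 0 < e) by (apply Rdiv_lt_0_compat; nra).
  assert (HeM : e * M <= 1).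
  { unfold e. apply Rmult_le_reg_r with (M + d); [lra |].
    field_simplify; lra. }
  assert (HeMM : e * M * M <= d).
  { unfold e. apply Rmult_le_reg_r with (M + d); [lra |].
    field_simplify; nra. }
  exists e, (-1), (4 / e), (2 / e). intros x Hx.
  assert (Hex : Rabs (e * x) <= e * M)
    by (rewrite Rabs_mult, Rabs_right by lra; apply Rmult_le_compat_l; lra).
  assert (Hex1 : e * x <= 1) by (split_Rabs; lra).
  rewrite sigma_tilde_nonpos by lra.
  replace (4 / e * ((e * x + -1) / (1 - (e * x + -1))) + 2 / e - x)
    with (e * x * x * / (2 - e * x)) by (field; lra).
  assert (Hinv : 0 < / (2 - e * x) <= 1).
  { split; [apply Rinv_0_lt_compat; lra |].
    rewrite <- Rinv_1. apply Rinv_le_contravar; lra. }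
  rewrite Rabs_mult, (Rabs_right (/ _)) by lra.
  assert (Rabs (e * x * x) <= d).
  { rewrite Rabs_mult. apply Rle_trans with (e * M * M); [| exact HeMM].
    apply Rmult_le_compat; [apply Rabs_pos | apply Rabs_pos | exact Hex | lra]. }
  pose proof (Rabs_pos (e * x * x)). nra.
Qed.

Lemma sigma_tilde_Lipschitz_nonpos (q x : R) : q <= 0 -> x <= 0 ->
  Rabs (sigma_tilde q - sigma_tilde x) <= Rabs (q - x).
Proof.
  intros Hq Hx. rewrite !sigma_tilde_nonpos by assumption.
  replace (q / (1 - q) - x / (1 - x)) with ((q - x) * / ((1 - q) * (1 - x))) by (field; lra).
  assert (Hinv : 0 < / ((1 - q) * (1 - x)) <= 1).
  { split; [apply Rinv_0_lt_compat; nra |].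
    rewrite <- Rinv_1. apply Rinv_le_contravar; nra. }
  rewrite Rabs_mult, (Rabs_right (/ _)) by lra.
  pose proof (Rabs_pos (q - x)). nra.
Qed.

Lemma sigma_act_recombination (x d aa ii S : R) : 0 < d ->
  Rabs (aa - Rabs x) <= d -> Rabs (ii - x) <= d ->
  Rabs (S - sigma1 ((ii + aa) / 2)) <= d ->
  Rabs (S + sigma_tilde ((ii - aa) / 2 - d) - sigma_act x) <= 4 * d.
Proof.
  intros Hd Haa Hii HS.
  set (p := (ii + aa) / 2) in *. set (q := (ii - aa) / 2 - d).
  destruct (Rle_dec 0 x) as [Hx | Hx].
  - rewrite sigma_act_nonneg by exact Hx. rewrite (Rabs_right x) in Haa by lra.
    pose proof (sigma1_Lipschitz p x) as Hp.
    assert (Hq0 : q <= 0) by (unfold q; split_Rabs; lra).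
    pose proof (sigma_tilde_Lipschitz_nonpos q 0 Hq0 (Rle_refl 0)) as Hq.
    rewrite (sigma_tilde_nonpos 0), Rminus_0_r in Hq by lra.
    replace (0 / (1 - 0)) with 0 in Hq by field.
    assert (Rabs (p - x) <= d) by (unfold p; split_Rabs; lra).
    assert (Rabs q <= 2 * d) by (unfold q; split_Rabs; lra).
    split_Rabs; lra.
  - rewrite sigma_act_nonpos by lra. rewrite (Rabs_left x) in Haa by lra.
    assert (Hq0 : q <= x) by (unfold q; split_Rabs; lra).
    pose proof (sigma_tilde_Lipschitz_nonpos q x ltac:(lra) ltac:(lra)) as Hq.
    pose proof (sigma1_le_dist p 0) as Hp0. rewrite Rmult_0_r, Rminus_0_r in Hp0.
    pose proof (sigma1_bounds p).
    assert (Rabs p <= d) by (unfold p; split_Rabs; lra).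
    assert (Rabs (q - x) <= 2 * d) by (unfold q; split_Rabs; lra).
    split_Rabs; lra.
Qed.

Theorem lemma12 : forall eps M : R, 0 < eps -> 0 < M ->
  exists phi : R -> R, nn_generated sigma_tilde 50 6 phi /\
    forall x, -M <= x <= M -> Rabs (phi x - sigma_act x) < eps.
Proof.
  intros eps M Heps HM. set (d := eps / 8).
  assert (Hd : 0 < d) by (unfold d; lra).
  destruct (Rabs_neuron_pair_approx M d HM Hd) as [w [alpha0 [a0 [a1 [beta0 Habs]]]]].
  destruct (id_neuron_approx M d HM Hd) as [w' [a [alpha1 [beta1 Hid]]]].
  destruct (sigma1_neuron_pair_approx (M + d) d ltac:(lra) Hd) as [alpha [b0 [b1 [beta Hsigma1]]]].
  eexists. split.
  { apply (nn_generated_recombination sigma_tilde 50 6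
             w a0 a1 alpha0 beta0 w' a alpha1 beta1 alpha b0 b1 beta d); lia. }
  intros x Hx. assert (HxM : Rabs x <= M) by (split_Rabs; lra). cbv zeta.
  specialize (Habs x HxM). specialize (Hid x HxM).
  apply Rle_lt_trans with (4 * d); [| unfold d; lra].
  apply sigma_act_recombination; [exact Hd | exact Habs | exact Hid |].
  apply Hsigma1. split_Rabs; lra.
Qed.
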